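(* Let $\mathcal{A}$ be a complex unital structurable algebra of type $(2,1)$. Then $\mathcal{A}$ is isomorphic (as an algebra with involution) to the universal unital algebra ${\rm A}_1$ of type $(2,1)$, or to one of the following algebras with basis $\{e_1,e_2,e_3\}$, unit $e_1$, involution given by $\overline{e_1}=e_1$, $\overline{e_2}=e_2$, $\overline{e_3}=-e_3$, and multiplication table (besides $e_1e_i=e_ie_1=e_i$; all unlisted products of basis elements are zero): \begin{itemize} \item ${\rm A}_2$: $e_3e_3=e_2$; \item ${\rm A}_3$: $e_2e_2=e_2$; \item ${\rm A}_4$: $e_2e_2=e_2$, $e_3e_3=-e_1+e_2$; \item ${\rm A}_5$: $e_2e_3=e_2$, $e_3e_2=-e_2$, $e_3e_3=e_1$. \end{itemize}
   Context: An involution on an algebra $\mathcal{A}$ is a linear map $x\mapsto\overline{x}$ with $\overline{\overline{x}}=x$ and $\overline{xy}=\overline{y}\,\overline{x}$. For a unital algebra with involution write $\mathcal{A}=\mathcal{H}\oplus\mathcal{S}$ with $\mathcal{H}=\{a:\overline a=a\}$, $\mathcal{S}=\{a:\overline a=-a\}$; $\mathcal{A}$ is of type $(k,n-k)$ if $\dim\mathcal{A}=n$ and $\dim\mathcal{H}=k$. For $x,y\in\mathcal{A}$ define $V_{x,y}(z)=(x\overline{y})z+(z\overline{y})x-(z\overline{x})y$ and $T_x(z)=xz+zx-z\overline{x}$ (so $T_x=V_{x,1}$). A unital algebra with involution is structurable if $T_zV_{x,y}-V_{x,y}T_z=V_{T_z(x),y}-V_{x,T_{\overline z}(y)}$ for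 all $x,y,z$. An isomorphism of algebras with involution is a linear bijection $\varphi$ with $\varphi(xy)=\varphi(x)\varphi(y)$ and $\varphi(\overline x)=\overline{\varphi(x)}$. The universal unital algebra of type $(2,1)$ is the $3$-dimensional algebra with basis $e_1,e_2,e_3$, whose only nonzero products of basis elements are $e_1e_i=e_ie_1=e_i$, with involution $\overline{e_1}=e_1$, $\overline{e_2}=e_2$, $\overline{e_3}=-e_3$. *)

From HB Require Import structures.
From mathcomp Require Import all_boot all_order all_algebra.
From mathcomp Require Import reals complex.
Set Implicit Arguments. Unset Strict Implicit. Unset Printing Implicit Defensive.
Import Order.TTheory GRing.Theory Num.Theory.
Local Open Scope ring_scope.

Section AlgebraWithInvolution.
Variable (K : fieldType) (V : vectType K).
Variable (mul : V -> V -> V) (bar : 'End(V)).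

Definition bilinear_mul : Prop :=
  (forall (a : K) (x y z : V), mul (a *: x + y) z = a *: mul x z + mul y z) /\
  (forall (a : K) (x y z : V), mul z (a *: x + y) = a *: mul z x + mul z y).

Definition unital : Prop :=
  exists one : V, forall x, mul one x = x /\ mul x one = x.

(* bar is an involution: linear (as an element of 'End(V)), of order 2,
   and an anti-automorphism *)
Definition is_involution : Prop :=
  (forall x, bar (bar x) = x) /\ (forall x y, bar (mul x y) = mul (bar y) (bar x)).

Definition herm_space : {vspace V} := lker (bar - \1)%VF.

(* type (k, n-k) *)
Definition of_type (n k : nat) : Prop :=
  \dim {:V} = n /\ \dim herm_space = k.

Definition Vop (x y : V) (z : V) : V :=
  mul (mul x (bar y)) z + mul (mul z (bar y)) x - mul (mul z (bar x)) y.

Definition Top (x : V) (z : V) : V := mul x z + mul z x - mul z (bar x).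

(* T_z V_{x,y} - V_{x,y} T_z = V_{T_z(x),y} - V_{x,T_{bar z}(y)},
   as operators, evaluated at an arbitrary w *)
Definition structurable : Prop :=
  forall x y z w : V,
    Top z (Vop x y w) - Vop x y (Top z w)
    = Vop (Top z x) y w - Vop x (Top (bar z) y) w.

End AlgebraWithInvolution.

(* The model algebras A_1, ..., A_5 on K^3 = 'rV[K]_3, basis e_1,e_2,e_3
   being delta_mx 0 0, delta_mx 0 1, delta_mx 0 2 (indices shifted by one). *)
Section Models.
Variable K : fieldType.

Definition eb (i : 'I_3) : 'rV[K]_3 := delta_mx 0 i.

Definition tabA (k : nat) (i j : 'I_3) : 'rV[K]_3 :=
  if (i : nat) == 0%N then eb j
  else if (j : nat) == 0%N then eb i
  else match k, (i : nat), (j : nat) with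
  | 2%N, 2%N, 2%N => eb (inord 1)
  | 3%N, 1%N, 1%N => eb (inord 1)
  | 4%N, 1%N, 1%N => eb (inord 1)
  | 4%N, 2%N, 2%N => - eb (inord 0) + eb (inord 1)
  | 5%N, 1%N, 2%N => eb (inord 1)
  | 5%N, 2%N, 1%N => - eb (inord 1)
  | 5%N, 2%N, 2%N => eb (inord 0)
  | _, _, _ => 0
  end.

Definition mulA (k : nat) (u v : 'rV[K]_3) : 'rV[K]_3 :=
  \sum_(i < 3) \sum_(j < 3) (u 0 i * v 0 j) *: tabA k i j.

Definition barA (u : 'rV[K]_3) : 'rV[K]_3 :=
  \row_i (if (i : nat) == 2%N then - u 0 i else u 0 i).

End Models.

Definition iso_to_model (K : fieldType) (V : vectType K)
  (mul : V -> V -> V) (bar : 'End(V)) (k : nat) : Prop :=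
  exists phi : V -> 'rV[K]_3,
    [/\ linear phi, bijective phi,
        forall x y, phi (mul x y) = mulA k (phi x) (phi y) &
        forall x, phi (bar x) = barA (phi x)].

(* The hermitian part of A has dimension 2 and contains the unit, so A has a
   basis [1, h, s] with h hermitian and s skew.  Since h h and s s are
   hermitian and s h = - bar (h s), the whole product is encoded by seven
   structure constants: h h = a + b h, s s = p + q h, h s = u + v h + w s.
   Evaluating the structurability identity on basis elements gives
   u = - v w, a = w^2 - b w, p = v^2 + q w - b q, v (b - 2 w) = 0 and q v = 0.
   Splitting into cases on whether b = 2 w, v = 0 and q = 0, an explicit
   basis [1, al + be h, t s] then carries the multiplication table of one of
   A_1, ..., A_5; over C the last case needs a square root of q (b - 2 w). *)

From HB Require Import structures.
From mathcomp Require Import all_boot all_order all_algebra.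
From mathcomp Require Import reals complex.
From mathcomp Require Import ring.
Set Implicit Arguments. Unset Strict Implicit. Unset Printing Implicit Defensive.
Import Order.TTheory GRing.Theory Num.Theory.
Local Open Scope ring_scope.

Section Bilinear.
Variables (K : fieldType) (V : vectType K) (mul : V -> V -> V).
Hypothesis mul_bilinear : bilinear_mul mul.

Lemma mulDv x y z : mul (x + y) z = mul x z + mul y z.
Proof. by have := mul_bilinear.1 1 x y z; rewrite !scale1r. Qed.

Lemma mulvD x y z : mul z (x + y) = mul z x + mul z y.
Proof. by have := mul_bilinear.2 1 x y z; rewrite !scale1r. Qed.

Lemma mul0v z : mul 0 z = 0.
Proof. by apply: (addrI (mul 0 z)); rewrite -mulDv !addr0. Qed.

Lemma mulv0 z : mul z 0 = 0.
Proof. by apply: (addrI (mul z 0)); rewrite -mulvD !addr0. Qed.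

Lemma mulZv k x z : mul (k *: x) z = k *: mul x z.
Proof. by have := mul_bilinear.1 k x 0 z; rewrite !addr0 mul0v addr0. Qed.

Lemma mulvZ k x z : mul z (k *: x) = k *: mul z x.
Proof. by have := mul_bilinear.2 k x 0 z; rewrite !addr0 mulv0 addr0. Qed.

Lemma mulNv x z : mul (- x) z = - mul x z.
Proof. by rewrite -scaleN1r mulZv scaleN1r. Qed.

Lemma mulvN x z : mul z (- x) = - mul z x.
Proof. by rewrite -scaleN1r mulvZ scaleN1r. Qed.

End Bilinear.

Section Isomorphism.
Variable K : fieldType.

Definition alg_iso (V W : vectType K) (mulV : V -> V -> V) (barV : V -> V)
    (mulW : W -> W -> W) (barW : W -> W) (phi : V -> W) : Prop :=
  [/\ linear phi, bijective phi,
      forall x y, phi (mulV x y) = mulW (phi x) (phi y) &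
      forall x, phi (barV x) = barW (phi x)].

Definition alg_isomorphic (V W : vectType K) (mulV : V -> V -> V) (barV : V -> V)
    (mulW : W -> W -> W) (barW : W -> W) : Prop :=
  exists phi, alg_iso mulV barV mulW barW phi.

Variables (U V W : vectType K).
Variables (mulU : U -> U -> U) (barU : U -> U).
Variables (mulV : V -> V -> V) (barV : V -> V).
Variables (mulW : W -> W -> W) (barW : W -> W).

Lemma alg_isomorphic_sym :
  alg_isomorphic mulV barV mulW barW -> alg_isomorphic mulW barW mulV barV.
Proof.
move=> [phi [phi_lin [psi phiK psiK] phiM phi_bar]].
have phi_inj := can_inj phiK.
exists psi; split.
- move=> a x y; apply: phi_inj; rewrite psiK.
  by have := phi_lin a (psi x) (psi y); rewrite !psiK.
- exact: Bijective psiK phiK.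
- by move=> x y; apply: phi_inj; rewrite phiM !psiK.
- by move=> x; apply: phi_inj; rewrite phi_bar !psiK.
Qed.

Lemma alg_isomorphic_trans :
  alg_isomorphic mulU barU mulV barV -> alg_isomorphic mulV barV mulW barW ->
  alg_isomorphic mulU barU mulW barW.
Proof.
move=> [phi [phi_lin phi_bij phiM phi_bar]] [psi [psi_lin psi_bij psiM psi_bar]].
exists (psi \o phi); split => /=.
- move=> a x y; apply: etrans (psi_lin a (phi x) (phi y)).
  by congr psi; apply: phi_lin.
- exact: bij_comp.
- by move=> x y; rewrite phiM psiM.
- by move=> x; rewrite phi_bar psi_bar.
Qed.

End Isomorphism.

Lemma structurable_transfer (K : fieldType) (V W : vectType K)
    (mulV : V -> V -> V) (barV : 'End(V)) (mulW : W -> W -> W) (barW : 'End(W)) :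
  alg_isomorphic mulV barV mulW barW ->
  structurable mulV barV -> structurable mulW barW.
Proof.
move=> [phi [phi_lin [psi phiK psiK] phiM phi_bar]] strV x y z w.
pose phiL : {linear V -> W} := HB.pack phi (GRing.isLinear.Build K V W _ phi phi_lin).
have phiD : {morph phi : a b / a + b} := raddfD phiL.
have phiN : {morph phi : a / - a} := raddfN phiL.
rewrite -[x]psiK -[y]psiK -[z]psiK -[w]psiK.
have := congr1 phi (strV (psi x) (psi y) (psi z) (psi w)).
by rewrite /Top /Vop !(phiD, phiN, phiM, phi_bar).
Qed.

(* Structure constants of an algebra with basis [1, h, s]:
   [h h = hh0 + hh1 h], [s s = ss0 + ss1 h], [h s = hs0 + hs1 h + hs2 s]
   and [s h = - hs0 - hs1 h + hs2 s]. *)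
Record table (K : Type) :=
  Table { hh0 : K; hh1 : K; ss0 : K; ss1 : K; hs0 : K; hs1 : K; hs2 : K }.

HB.lock Definition row3 (K : fieldType) (x : K * K * K) : 'rV[K]_3 :=
  \row_(j < 3) [:: x.1.1; x.1.2; x.2]`_j.

Definition mul3 (K : fieldType) (c : table K) (x y : K * K * K) : K * K * K :=
  let: (x1, xh, xs) := x in let: (y1, yh, ys) := y in
  (x1 * y1 + xh * yh * hh0 c + xs * ys * ss0 c + (xh * ys - xs * yh) * hs0 c,
   x1 * yh + xh * y1 + xh * yh * hh1 c + xs * ys * ss1 c + (xh * ys - xs * yh) * hs1 c,
   x1 * ys + xs * y1 + (xh * ys + xs * yh) * hs2 c).

HB.lock Definition mulT (K : fieldType) (c : table K) (x y : 'rV[K]_3) : 'rV[K]_3 :=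
  row3 (mul3 c (x 0 0, x 0 1, x 0 2) (y 0 0, y 0 1, y 0 2)).

Definition model_table (K : fieldType) (k : nat) : table K :=
  match k with
  | 2 => Table 0 0 0 1 0 0 0
  | 3 => Table 0 1 0 0 0 0 0
  | 4 => Table 0 1 (-1) 1 0 0 0
  | 5 => Table 0 0 1 0 0 1 0
  | _ => Table 0 0 0 0 0 0 0
  end.

Section TableAlgebra.
Variable K : fieldType.
Implicit Types (x y : K * K * K) (c : table K).

Definition add3 x y : K * K * K := (x.1.1 + y.1.1, x.1.2 + y.1.2, x.2 + y.2).
Definition opp3 x : K * K * K := (- x.1.1, - x.1.2, - x.2).
Definition bar3 x : K * K * K := (x.1.1, x.1.2, - x.2).

Lemma row3E (x : 'rV[K]_3) : x = row3 (x 0 0, x 0 1, x 0 2).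
Proof.
apply/rowP => -[[|[|[|//]]] j_lt3]; rewrite row3.unlock !mxE.
all: by congr (x 0 _); apply: val_inj.
Qed.

Lemma row3K x : (row3 x 0 0, row3 x 0 1, row3 x 0 2) = x.
Proof. by case: x => [[a b] d]; rewrite row3.unlock !mxE. Qed.

Lemma row3_inj : injective (@row3 K).
Proof.
by move=> x y /(congr1 (fun r : 'rV[K]_3 => (r 0 0, r 0 1, r 0 2))); rewrite !row3K.
Qed.

Lemma row3D x y : row3 x + row3 y = row3 (add3 x y).
Proof. by apply/rowP => -[[|[|[|//]]] j_lt3]; rewrite row3.unlock !mxE. Qed.

Lemma row3N x : - row3 x = row3 (opp3 x).
Proof. by apply/rowP => -[[|[|[|//]]] j_lt3]; rewrite row3.unlock !mxE. Qed.

Lemma barA_row3 x : barA (row3 x) = row3 (bar3 x).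
Proof. by apply/rowP => -[[|[|[|//]]] j_lt3]; rewrite row3.unlock !mxE. Qed.

Lemma mulT_row3 c x y : mulT c (row3 x) (row3 y) = row3 (mul3 c x y).
Proof. by rewrite mulT.unlock !row3K. Qed.

Fact barA_is_linear : linear (@barA K).
Proof.
by move=> k x y; apply/rowP => -[[|[|[|//]]] j_lt3]; rewrite !mxE /= ?opprD ?mulrN.
Qed.

Definition barL : 'End('rV[K]_3) := linfun (@barA K).

Lemma barLE : barL =1 @barA K.
Proof. exact: (lfunE (HB.pack (@barA K) (GRing.isLinear.Build K _ _ _ _ barA_is_linear))). Qed.

Lemma mulA_model k : mulA k =2 mulT (model_table K k).
Proof.
move=> x y; rewrite (row3E x) (row3E y) mulT_row3.
apply/rowP => j; rewrite /mulA !summxE !big_ord_recl !big_ord0 /tabA /eb row3.unlock !mxE /=.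
by case: k => [|[|[|[|[|[|k]]]]]]; case: j => -[|[|[|//]]] j_lt3;
  rewrite /= !mxE -?val_eqE /= ?inordK //=; ring.
Qed.

Variable c : table K.
Local Notation m := (mul3 c).

Definition Top3 x z : K * K * K := add3 (add3 (m x z) (m z x)) (opp3 (m z (bar3 x))).

Definition Vop3 x y z : K * K * K :=
  add3 (add3 (m (m x (bar3 y)) z) (m (m z (bar3 y)) x)) (opp3 (m (m z (bar3 x)) y)).

Lemma structurable_mulT : structurable (mulT c) barL ->
  forall x y z t,
    add3 (Top3 z (Vop3 x y t)) (opp3 (Vop3 x y (Top3 z t))) =
    add3 (Vop3 (Top3 z x) y t) (opp3 (Vop3 x (Top3 (bar3 z) y) t)).
Proof.
move=> str x y z t; apply: row3_inj; have := str (row3 x) (row3 y) (row3 z) (row3 t).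
rewrite /Top /Vop !barLE; do ![rewrite [mulT _ (row3 _) (row3 _)]mulT_row3 |
  rewrite [row3 _ + row3 _]row3D | rewrite [- row3 _]row3N | rewrite [barA (row3 _)]barA_row3].
by [].
Qed.

End TableAlgebra.

Lemma eq0_of_scaled_diff (K : numDomainType) (k : nat) (T P Q : K) :
  (0 < k)%N -> P - Q = k%:R * T -> P = Q -> T = 0.
Proof.
move=> k_gt0 + PQ; rewrite PQ subrr => /esym/eqP.
by rewrite mulf_eq0 pnatr_eq0 (gtn_eqF k_gt0) => /eqP.
Qed.

Lemma mulT_structurable_eqs (K : numFieldType) (a b p q u v w : K) :
  structurable (mulT (Table a b p q u v w)) (barL K) ->
  [/\ u = - (v * w), a = w ^+ 2 - b * w, p = v ^+ 2 + q * w - b * q,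
      v * (b - 2 * w) = 0 & q * v = 0].
Proof.
move=> /structurable_mulT str.
have := str (1, 0, 0) (0, 0, 1) (0, 1, 0) (0, 1, 0).
move=> /[dup] /(congr1 (fun r => r.1.2)) E12 /(congr1 snd) E13.
have := str (1, 0, 0) (0, 0, 1) (0, 1, 0) (0, 0, 1).
move=> /[dup] /(congr1 (fun r => r.1.2)) E22 /(congr1 snd) E23.
have := str (0, 0, 1) (0, 0, 1) (0, 0, 1) (1, 0, 0).
move=> /(congr1 (fun r => r.1.2)) E32.
cbv beta iota delta [Top3 Vop3 mul3 add3 opp3 bar3 fst snd hh0 hh1 ss0 ss1 hs0 hs1 hs2]
  in E12, E13, E22, E23, E32.
have Hu : u = - (v * w).
  by apply/subr0_eq/(eq0_of_scaled_diff (k := 4) isT _ E23); ring.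
split=> //.
- by apply/subr0_eq/(eq0_of_scaled_diff (k := 4) isT _ E13); ring.
- by apply/esym/subr0_eq/(eq0_of_scaled_diff (k := 2) isT _ E22); ring.
- by apply: (eq0_of_scaled_diff (k := 4) isT _ E12); rewrite Hu; ring.
- by apply: (eq0_of_scaled_diff (k := 8) isT _ E32); ring.
Qed.

Section ChangeOfBasis.
Variables (K : fieldType) (al be t : K).

(* Coordinates on [1, h, s] of the vector with coordinates [x] on the basis
   [1, al + be h, t s]. *)
Definition unbase (x : K * K * K) : K * K * K :=
  let: (x1, xh, xs) := x in (x1 + xh * al, xh * be, xs * t).

Definition rebase (x : K * K * K) : K * K * K :=
  let: (x1, xh, xs) := x in (x1 - xh / be * al, xh / be, xs / t).

Definition unbase_row (x : 'rV[K]_3) : 'rV[K]_3 := row3 (unbase (x 0 0, x 0 1, x 0 2)).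

Lemma unbase_row3 x : unbase_row (row3 x) = row3 (unbase x).
Proof. by rewrite /unbase_row row3K. Qed.

Hypotheses (be_neq0 : be != 0) (t_neq0 : t != 0).

Lemma unbaseK : cancel unbase rebase.
Proof. by move=> [[x1 xh] xs]; congr (_, _, _); field. Qed.

Lemma rebaseK : cancel rebase unbase.
Proof. by move=> [[x1 xh] xs]; congr (_, _, _); field. Qed.

Lemma unbase_row_iso (c : table K) k :
  (forall x y, unbase (mul3 (model_table K k) x y) = mul3 c (unbase x) (unbase y)) ->
  alg_isomorphic (mulA k) (@barA K) (mulT c) (barL K).
Proof.
move=> unbaseM; exists unbase_row; split.
- move=> r x y; apply/rowP => -[[|[|[|//]]] j_lt3];
    rewrite /unbase_row row3.unlock !mxE /=; ring.
- exists (fun x : 'rV[K]_3 => row3 (rebase (x 0 0, x 0 1, x 0 2))) => x.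
    by rewrite /unbase_row row3K unbaseK -row3E.
  by rewrite unbase_row3 rebaseK -row3E.
- move=> x y; rewrite mulA_model (row3E x) (row3E y) mulT_row3.
  by rewrite !unbase_row3 mulT_row3 unbaseM.
- by move=> x; rewrite barLE (row3E x) barA_row3 !unbase_row3 barA_row3 /= mulNr.
Qed.

End ChangeOfBasis.

Lemma mulT_normal_form (K : numClosedFieldType) (c : table K) :
  structurable (mulT c) (barL K) ->
  exists2 k, (1 <= k <= 5)%N & alg_isomorphic (mulA k) (@barA K) (mulT c) (barL K).
Proof.
case: c => a b p q u v w /mulT_structurable_eqs [-> -> -> vb qv].
have one_neq0 : (1 : K) != 0 := oner_neq0 K.
case: (eqVneq b (2 * w)) => [-> | b_neq].
- case: (eqVneq v 0) => [-> | v_neq0].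
  + case: (eqVneq q 0) => [-> | q_neq0].
    (* basis [1, h - w, s] *)
    * exists 1%N => //; apply: (unbase_row_iso (al := - w) one_neq0 one_neq0).
      by move=> [[x1 xh] xs] [[y1 yh] ys] /=; congr (_, _, _); ring.
    (* basis [1, q (h - w), s] *)
    * exists 2%N => //; apply: (unbase_row_iso (al := - (q * w)) q_neq0 one_neq0).
      by move=> [[x1 xh] xs] [[y1 yh] ys] /=; congr (_, _, _); ring.
  + have -> : q = 0 by move/eqP: qv; rewrite mulf_eq0 (negbTE v_neq0) orbF => /eqP.
    (* basis [1, h - w, s / v] *)
    exists 5%N => //.
    apply: (unbase_row_iso (al := - w) one_neq0 (_ : v^-1 != 0)); first by rewrite invr_eq0.
    by move=> [[x1 xh] xs] [[y1 yh] ys] /=; congr (_, _, _); field.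
- have -> : v = 0.
    by move/eqP: vb; rewrite mulf_eq0 subr_eq0 (negbTE b_neq) orbF => /eqP.
  move: b_neq; rewrite -subr_eq0; set d := b - 2 * w => d_neq0.
  have -> : b = 2 * w + d by rewrite /d addrC subrK.
  have dV_neq0 : d^-1 != 0 by rewrite invr_eq0.
  case: (eqVneq q 0) => [-> | q_neq0].
  (* basis [1, (h - w) / d, s]; (h - w) / d is idempotent *)
  + exists 3%N => //; apply: (unbase_row_iso (al := - w / d) dV_neq0 one_neq0).
    by move=> [[x1 xh] xs] [[y1 yh] ys] /=; congr (_, _, _); field.
  (* basis [1, (h - w) / d, s / r] with r ^+ 2 = q d *)
  + have [r r_neq0 ->] : exists2 r : K, r != 0 & q = r ^+ 2 / d.
      by exists (sqrtC (q * d)); rewrite ?sqrtC_eq0 ?mulf_neq0 // sqrtCK mulfK.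
    exists 4%N => //.
    apply: (unbase_row_iso (al := - w / d) dV_neq0 (_ : r^-1 != 0)); first by rewrite invr_eq0.
    by move=> [[x1 xh] xs] [[y1 yh] ys] /=; congr (_, _, _); field; rewrite d_neq0 r_neq0.
Qed.

Section Coordinates.
Variables (K : numFieldType) (V : vectType K) (mul : V -> V -> V) (bar : 'End(V)).
Hypothesis mul_bilinear : bilinear_mul mul.
Hypothesis bar_anti : forall x y, bar (mul x y) = mul (bar y) (bar x).
Variables one h s : V.
Hypotheses (mul1v : forall x, mul one x = x) (mulv1 : forall x, mul x one = x).
Hypotheses (bar1 : bar one = one) (barh : bar h = h) (bars : bar s = - s).
Hypothesis basis_ohs : basis_of fullv [:: one; h; s].

Let X : 3.-tuple V := [tuple one; h; s].

Definition coords (x : V) : 'rV[K]_3 := \row_i coord X i x.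

Definition cmb (r : 'rV[K]_3) : V := r 0 0 *: one + r 0 1 *: h + r 0 2 *: s.

Lemma coordsK : cancel coords cmb.
Proof.
move=> x; have spanX : <<X>>%VS = fullv by case/andP: basis_ohs => /eqP.
rewrite [RHS](coord_span (_ : x \in <<X>>%VS)) ?spanX ?memvf //.
rewrite !big_ord_recl big_ord0 addr0 addrA /cmb !mxE.
by congr (coord X _ x *: _ + coord X _ x *: _ + coord X _ x *: _); apply: val_inj.
Qed.

Lemma coord_cmb r i : coord X i (cmb r) = r 0 i.
Proof.
have freeX : free X by case/andP: basis_ohs.
rewrite /cmb !linearD !linearZ /=.
rewrite (coord_free 0 i freeX) (coord_free 1 i freeX) (coord_free 2 i freeX).
case: i => -[|[|[|//]]] i_lt3; rewrite /= ?mulr1 ?mulr0 ?addr0 ?add0r.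
all: by congr (r 0 _); apply: val_inj.
Qed.

Lemma cmbK : cancel cmb coords.
Proof. by move=> r; apply/rowP => i; rewrite mxE coord_cmb. Qed.

Lemma bar_cmb r : bar (cmb r) = cmb (barA r).
Proof. by rewrite /cmb !linearD !linearZ /= bar1 barh bars !mxE /= scalerN scaleNr. Qed.

Lemma coords_herm x : bar x = x -> coords x 0 2 = 0.
Proof.
move=> xH; have := congr1 coords xH; rewrite -{1}[x]coordsK bar_cmb cmbK.
by move=> /rowP /(_ 2); rewrite !mxE /= => /eqP; rewrite eqNr => /eqP.
Qed.

Definition coords_table : table K :=
  let: (hh, ss, hs) := (coords (mul h h), coords (mul s s), coords (mul h s)) in
  Table (hh 0 0) (hh 0 1) (ss 0 0) (ss 0 1) (hs 0 0) (hs 0 1) (hs 0 2).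

Lemma mul_cmb r r' : mul (cmb r) (cmb r') = cmb (mulT coords_table r r').
Proof.
have herm_cmb x : bar x = x -> x = cmb (row3 (coords x 0 0, coords x 0 1, 0)).
  by move=> xH; rewrite -(coords_herm xH) -row3E coordsK.
have := herm_cmb (mul h h); rewrite bar_anti barh => /(_ erefl) hh.
have := herm_cmb (mul s s).
rewrite bar_anti bars (mulNv mul_bilinear) (mulvN mul_bilinear) opprK => /(_ erefl) ss.
have sh : mul s h = - cmb (barA (coords (mul h s))).
  by rewrite -bar_cmb coordsK bar_anti barh bars (mulNv mul_bilinear) opprK.
have freeX : free X by case/andP: basis_ohs.
have coord1 j : coord X j one = (0 == j)%:R := coord_free 0 j freeX.
have coordh j : coord X j h = (1 == j)%:R := coord_free 1 j freeX.
have coords' j : coord X j s = (2 == j)%:R := coord_free 2 j freeX.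
apply: (can_inj coordsK); rewrite cmbK {1 2}/cmb.
rewrite !(mulDv mul_bilinear, mulvD mul_bilinear, mulZv mul_bilinear, mulvZ mul_bilinear).
rewrite !mul1v !mulv1 -[mul h s]coordsK sh hh ss.
rewrite [in RHS](row3E r) [in RHS](row3E r') mulT_row3.
apply/rowP => j; rewrite !mxE !linearD !linearN !linearZ /= !coord1 !coordh !coords'.
by case: j => -[|[|[|//]]] j_lt3; rewrite row3.unlock !mxE /=; ring.
Qed.

Lemma coords_isomorphic : alg_isomorphic mul bar (mulT coords_table) (barL K).
Proof.
exists coords; split.
- by move=> k x y; apply/rowP => i; rewrite !mxE linearP.
- exact: Bijective coordsK cmbK.
- by move=> x y; rewrite -{1}[x]coordsK -{1}[y]coordsK mul_cmb cmbK.
- by move=> x; rewrite barLE -{1}[x]coordsK bar_cmb cmbK.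
Qed.

End Coordinates.

Section AdaptedBasis.
Variables (K : numFieldType) (V : vectType K) (mul : V -> V -> V) (bar : 'End(V)).
Hypotheses (mul_bilinear : bilinear_mul mul) (bar_involution : is_involution mul bar).
Variable one : V.
Hypothesis mul1v : forall x, mul one x = x.

Lemma bar_one : bar one = one.
Proof.
have [barK bar_anti] := bar_involution.
have right_unit y : mul y (bar one) = y by rewrite -[y]barK -bar_anti mul1v.
by rewrite -[bar one]mul1v right_unit.
Qed.

Lemma herm_spaceE x : (x \in herm_space bar) = (bar x == x).
Proof. by rewrite memv_ker add_lfunE opp_lfunE id_lfunE subr_eq0. Qed.

Lemma herm_skew_eq0 x : bar x = x -> bar x = - x -> x = 0.
Proof.
move=> -> /eqP; rewrite -addr_eq0 -mulr2n -scaler_nat scaler_eq0 pnatr_eq0 /=.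
by move/eqP.
Qed.

Lemma adapted_basis : of_type bar 3 2 ->
  exists h s, [/\ bar h = h, bar s = - s & basis_of fullv [:: one; h; s]].
Proof.
move=> [dimV dimH]; have [barK _] := bar_involution.
have one_neq0 : one != 0.
  apply/eqP => one0; suff : (fullv <= (0 : {vspace V}))%VS by rewrite subv0 -dimv_eq0 dimV.
  by apply/subvP => x _; rewrite -(mul1v x) one0 (mul0v mul_bilinear) mem0v.
have [h hH h_notin] : exists2 h, h \in herm_space bar & h \notin <[one]>%VS.
  by apply/subvPn/negP => /dimvS; rewrite dimH dim_vline one_neq0.
have [x _ x_notin] : exists2 x, x \in fullv & x \notin herm_space bar.
  by apply/subvPn/negP => /dimvS; rewrite dimV dimH.
have bar_s : bar (x - bar x) = - (x - bar x) by rewrite linearB /= barK opprB.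
have s_neq0 : x - bar x != 0 by rewrite subr_eq0 eq_sym -herm_spaceE.
exists h, (x - bar x); split=> //; first by apply/eqP; rewrite -herm_spaceE.
rewrite basisEfree subvf dimV andbT.
have perm_ohs : perm_eq [:: one; h; x - bar x] ([:: h; one] ++ [:: x - bar x]).
  by apply/permPl; exact: (perm_catCA [:: one] [:: h] [:: x - bar x]).
rewrite (perm_free perm_ohs) cat_free free_cons !span_seq1 h_notin !seq1_free.
rewrite one_neq0 s_neq0 /=.
have span_herm : (<<[:: h; one]>> <= herm_space bar)%VS.
  by rewrite span_cons span_seq1 subv_add -!memvE hH herm_spaceE bar_one eqxx.
apply/directv_addP/eqP; rewrite -subv0; apply/subvP => y.
move=> /memv_capP [/(subvP span_herm) yH /vlineP [c yc]]; subst y.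
rewrite memv0; apply/eqP/herm_skew_eq0; first by apply/eqP; rewrite -herm_spaceE.
by rewrite linearZ /= bar_s scalerN.
Qed.

End AdaptedBasis.

Theorem mainTheorem1 (R : realType) (V : vectType R[i])
  (mul : V -> V -> V) (bar : 'End(V)) :
  bilinear_mul mul -> unital mul -> is_involution mul bar ->
  of_type bar 3 2 -> structurable mul bar ->
  exists2 k : nat, (1 <= k <= 5)%N & iso_to_model mul bar k.
Proof.
move=> mul_bilinear [one one_unit] bar_involution V_type str.
have [mul1v mulv1] : (forall x, mul one x = x) /\ (forall x, mul x one = x).
  by split=> x; have [] := one_unit x.
have [_ bar_anti] := bar_involution.
have bar1 := bar_one bar_involution mul1v.
have [h [s [barh bars basis]]] := adapted_basis mul_bilinear bar_involution mul1v V_type.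
have coordsV := coords_isomorphic mul_bilinear bar_anti mul1v mulv1 bar1 barh bars basis.
have [k k_range modelV] := mulT_normal_form (structurable_transfer coordsV str).
by exists k => //; apply: alg_isomorphic_trans coordsV (alg_isomorphic_sym modelV).
Qed.
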